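(* Let $G$ be a connected cograph which is $k$-connected, and let $S$ be a minimal vertex separator of $G$ with $|S|=k$. Let $G_1,G_2,\ldots,G_m$, $m\geq 2$, be the connected components of $G\setminus S$. Then for every edge $\{u,v\}$ lying in a non-trivial component $G_i$ (i.e. one with at least two vertices), $N_G(u)\cap S=N_G(v)\cap S$.
   Context: A cograph is a graph that can be built from single vertices by repeatedly taking disjoint unions and joins; equivalently, a graph with no induced path on four vertices. Graphs are finite, simple, undirected. $N_G(v)$ is the set of neighbours of $v$ in $G$, and $G\setminus S$ is the subgraph induced on $V(G)\setminus S$. A vertex separator of a connected graph $G$ is a set $S\subset V(G)$ such that $G\setminus S$ is disconnected; it is minimal if no proper subset of $S$ is a vertex separator; a minimum vertex separator is a minimal vertex separator of least size. The paper calls $G$ $k$-connected if there exists a minimum vertex separator of size $k$ (i.e. the least size of a vertex separator is exactly $k$). A component is trivial if it has exactly one vertex. *)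

From mathcomp Require Import all_boot.
Set Implicit Arguments. Unset Strict Implicit. Unset Printing Implicit Defensive.

Definition simple_graph (T : finType) (e : rel T) : Prop :=
  symmetric e /\ irreflexive e.

Definition nbhd (T : finType) (e : rel T) (v : T) : {set T} := [set w | e v w].

Definition induced_rel (T : finType) (e : rel T) (A : {set T}) : rel T :=
  fun x y => [&& x \in A, y \in A & e x y].

(* The induced subgraph G[A] is connected (the empty graph is regarded as connected). *)
Definition connected_on (T : finType) (e : rel T) (A : {set T}) : Prop :=
  forall x y, x \in A -> y \in A -> connect (induced_rel e A) x y.

Definition connected_graph (T : finType) (e : rel T) : Prop :=
  connected_on e [set: T].

Definition induced_P4 (T : finType) (e : rel T) (a b c d : T) : bool :=
  [&& e a b, e b c, e c d, ~~ e a c, ~~ e b d & ~~ e a d].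

Definition cograph (T : finType) (e : rel T) : Prop :=
  simple_graph e /\ forall a b c d, ~ induced_P4 e a b c d.

Definition vertex_separator (T : finType) (e : rel T) (S : {set T}) : Prop :=
  ~ connected_on e (~: S).

Definition minimal_vertex_separator (T : finType) (e : rel T) (S : {set T}) : Prop :=
  vertex_separator e S /\ forall S' : {set T}, S' \proper S -> ~ vertex_separator e S'.

(* The paper's "k-connected": the least size of a vertex separator is exactly k. *)
Definition k_connected (T : finType) (e : rel T) (k : nat) : Prop :=
  (exists S, vertex_separator e S /\ #|S| = k) /\
  (forall S, vertex_separator e S -> k <= #|S|).

From mathcomp Require Import all_boot.
Set Implicit Arguments. Unset Strict Implicit. Unset Printing Implicit Defensive.

(* Suppose a b is an edge of G \ S and x in S is adjacent to a but not to b.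
   Some vertex w0 of G \ S is separated from a by S, while S minus x separates
   nothing; hence a path from w0 to a avoiding S minus x must leave the
   component of w0 through x, from a vertex w of that component.  Then w is
   adjacent to neither a nor b, and w - x - a - b is an induced P4. *)

Section InducedSubgraph.

Variables (T : finType) (e : rel T).

Lemma connected_onP (A : {set T}) :
  reflect (connected_on e A)
          [forall x in A, forall y in A, connect (induced_rel e A) x y].
Proof.
apply: (iffP forall_inP) => [conA x y xA yA | conA x xA].
  by have /forall_inP := conA x xA; apply.
by apply/forall_inP => y yA; apply: conA.
Qed.

Lemma non_separator_connected (S : {set T}) :
  ~ vertex_separator e S -> connected_on e (~: S).
Proof. by move=> not_sepS; case: (connected_onP (~: S)). Qed.

Hypothesis e_sym : symmetric e.

Lemma induced_rel_sym (A : {set T}) : symmetric (induced_rel e A).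
Proof. by move=> x y; rewrite /induced_rel e_sym; case: (x \in A); case: (y \in A). Qed.

Lemma separator_disconnected_from (S : {set T}) a :
  vertex_separator e S -> a \notin S ->
  exists2 w, w \in ~: S & ~~ connect (induced_rel e (~: S)) w a.
Proof.
move=> sepS aS.
have [/existsP[w /andP[wS nwa]] | all_to_a] :=
  boolP [exists w, (w \in ~: S) && ~~ connect (induced_rel e (~: S)) w a].
  by exists w.
case: sepS => x y xS yS.
have to_a w : w \in ~: S -> connect (induced_rel e (~: S)) w a.
  by move=> wS; apply/negPn; apply: contra all_to_a => nwa; apply/existsP; exists w; rewrite wS.
apply: connect_trans (to_a x xS) _.
by rewrite (sym_connect_sym (induced_rel_sym _)) to_a.
Qed.

Lemma connect_induced_exit (A B : {set T}) y z :
  y \in A -> connect (induced_rel e B) y z -> ~~ connect (induced_rel e A) y z ->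
  exists w v, [/\ w \in A, connect (induced_rel e A) y w, v \in B :\: A & e w v].
Proof.
move=> yA yz not_yz.
have [/existsP[w /existsP[v /and4P[wA yw vBA ewv]]] | no_exit] := boolP
  [exists w, exists v, [&& w \in A, connect (induced_rel e A) y w, v \in B :\: A & e w v]].
  by exists w, v.
pose C := [pred w | (w \in A) && connect (induced_rel e A) y w].
have closedC : closed (induced_rel e B) C.
  apply: intro_closed; first exact/sym_connect_sym/induced_rel_sym.
  move=> u v /and3P[_ vB euv] /andP[uA yu]; case vA: (v \in A).
    by rewrite inE vA (connect_trans yu) // connect1 // /induced_rel uA vA.
  case/negP: no_exit; apply/existsP; exists u; apply/existsP; exists v.
  by rewrite uA yu !inE vA vB.
have := closed_connect closedC yz; rewrite !inE yA connect0 => /esym/andP[_ yz_A].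
by rewrite yz_A in not_yz.
Qed.

End InducedSubgraph.

Lemma cograph_minimal_separator_nbhd (T : finType) (e : rel T) (S : {set T}) a b x :
  cograph e -> minimal_vertex_separator e S ->
  a \notin S -> b \notin S -> e a b -> x \in S -> e a x -> e b x.
Proof.
move=> [[e_sym _] noP4] [sepS minS] aS bS eab xS eax; apply/negPn/negP => not_ebx.
have [w0 w0S not_w0a] := separator_disconnected_from e_sym sepS aS.
have conn := non_separator_connected (minS _ (properD1 xS)).
have w0a : connect (induced_rel e (~: (S :\ x))) w0 a.
  have outside_Sx y : y \notin S -> y \in ~: (S :\ x).
    by move=> yS; rewrite !inE (negPf yS) andbF.
  by apply: conn; apply: outside_Sx; rewrite // -in_setC.
have [w [v [wS w0w /setDP[vSx vS] ewv]]] := connect_induced_exit e_sym w0S w0a not_w0a.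
have vx : v = x by move: vS vSx; rewrite !inE negbK => ->; rewrite andbT negbK => /eqP.
subst v; have {aS bS} [aS bS] : a \in ~: S /\ b \in ~: S by rewrite !inE.
have not_ewa : ~~ e w a.
  apply: contra not_w0a => ewa; apply: connect_trans w0w (connect1 _).
  by rewrite /induced_rel wS aS.
have not_ewb : ~~ e w b.
  apply: contra not_w0a => ewb; apply: connect_trans w0w (@connect_trans _ _ b w a _ _).
    by apply: connect1; rewrite /induced_rel wS bS ewb.
  by apply: connect1; rewrite /induced_rel bS aS e_sym.
apply: (noP4 w x a b).
by rewrite /induced_P4 ewv (e_sym x a) eax eab (e_sym x b) not_ebx not_ewa not_ewb.
Qed.

Theorem lemma1 (T : finType) (e : rel T) (k : nat) (S : {set T}) :
  cograph e -> connected_graph e -> k_connected e k ->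
  minimal_vertex_separator e S -> #|S| = k ->
  forall u v, u \notin S -> v \notin S -> e u v ->
  nbhd e u :&: S = nbhd e v :&: S.
Proof.
move=> cg _ _ minS _ u v uS vS euv.
have e_sym : symmetric e by case: cg => [[]].
apply/setP => x; rewrite !inE; case xS: (x \in S); rewrite ?andbT ?andbF //.
apply/idP/idP; first exact: (cograph_minimal_separator_nbhd cg minS uS vS euv).
by apply: (cograph_minimal_separator_nbhd cg minS vS uS _ xS); rewrite e_sym.
Qed.
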